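(* Let $X$ be a finite set. For each $x\in X$ there is a homomorphism $\rho_x:\mathbb{A}_X\to\mathbb{A}_X$ satisfying \[ \rho_x(a_{u,v})=\sum_{y\in X}a_{yu,xv} \] for all $u,v\in X^n$, $n\ge 0$.
   Context: For $n\geq 0$, $X^n$ is the set of words of length $n$ in $X$, with $X^0=\{\varnothing\}$; juxtaposition denotes concatenation of words. $\mathbb{A}_X$ is the universal $C^*$-algebra generated by elements $\{a_{u,v}: u,v\in X^n,\ n\geq 0\}$ subject to: (i) $a_{\varnothing,\varnothing}=1$; (ii) $a_{u,v}^*=a_{u,v}^2=a_{u,v}$; (iii) for all $n\geq0$, $u,v\in X^n$, $x\in X$: $a_{u,v}=\sum_{y\in X}a_{ux,vy}=\sum_{z\in X}a_{uz,vx}$. ''Homomorphism'' means $*$-homomorphism of $C^*$-algebras. *)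

From mathcomp Require Import all_boot all_algebra.
From mathcomp Require Import reals Rstruct.
From mathcomp Require Import complex.
Set Implicit Arguments.
Unset Strict Implicit.
Unset Printing Implicit Defensive.
Import GRing.Theory Num.Theory.
Local Open Scope ring_scope.
Local Open Scope complex_scope.

Definition RR := Rdefinitions.R.
Definition CC := RR[i].

Record cstar_algebra := CStarAlgebra {
  cs_alg :> algType CC;
  cs_norm : cs_alg -> RR;
  cs_star : cs_alg -> cs_alg;
  cs_norm_ge0 : forall x, 0 <= cs_norm x;
  cs_norm_eq0 : forall x, cs_norm x = 0 -> x = 0;
  cs_normD : forall x y, cs_norm (x + y) <= cs_norm x + cs_norm y;
  cs_normZ : forall (c : CC) x, (cs_norm (c *: x))%:C = `|c| * (cs_norm x)%:C;
  cs_normM : forall x y, cs_norm (x * y) <= cs_norm x * cs_norm y;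
  cs_complete : forall f : nat -> cs_alg,
    (forall e : RR, 0 < e -> exists N, forall m n, (N <= m)%N -> (N <= n)%N ->
        cs_norm (f m - f n) < e) ->
    exists l, forall e : RR, 0 < e -> exists N, forall n, (N <= n)%N ->
        cs_norm (f n - l) < e;
  cs_starD : forall x y, cs_star (x + y) = cs_star x + cs_star y;
  cs_starZ : forall (c : CC) x, cs_star (c *: x) = (c^*)%C *: cs_star x;
  cs_starM : forall x y, cs_star (x * y) = cs_star y * cs_star x;
  cs_starK : forall x, cs_star (cs_star x) = x;
  cs_cstar : forall x, cs_norm (cs_star x * x) = cs_norm x ^+ 2
}.

(** *-homomorphism of C*-algebras (not required to be unital). *)
Definition star_hom (A B : cstar_algebra) (f : A -> B) : Prop :=
  [/\ forall x y, f (x + y) = f x + f y,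
      forall (c : CC) x, f (c *: x) = c *: f x,
      forall x y, f (x * y) = f x * f y
    & forall x, f (cs_star x) = cs_star (f x)].

(** Words of length n over X are n-tuples; concatenation with a letter is
    rcons_tuple (on the right) / cons_tuple (on the left); the empty word is
    [tuple]. *)
Definition word_family (X : finType) (B : cstar_algebra) :=
  forall n : nat, n.-tuple X -> n.-tuple X -> B.

Definition AX_relations (X : finType) (B : cstar_algebra)
    (b : word_family X B) : Prop :=
  [/\ b 0%N [tuple] [tuple] = 1,
      forall n (u v : n.-tuple X),
        cs_star (b n u v) = b n u v /\ b n u v * b n u v = b n u v
    & forall n (u v : n.-tuple X) (x : X),
        b n u v = \sum_(y : X) b n.+1 (rcons_tuple u x) (rcons_tuple v y) /\
        b n u v = \sum_(z : X) b n.+1 (rcons_tuple u z) (rcons_tuple v x)].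

Definition is_universal_AX (X : finType) (A : cstar_algebra)
    (a : word_family X A) : Prop :=
  AX_relations a /\
  forall (B : cstar_algebra) (b : word_family X B), AX_relations b ->
    exists phi : A -> B,
      [/\ star_hom phi,
          forall n (u v : n.-tuple X), phi (a n u v) = b n u v
        & forall psi : A -> B, star_hom psi ->
            (forall n (u v : n.-tuple X), psi (a n u v) = b n u v) ->
            forall z, psi z = phi z].

From HB Require Import structures.
From mathcomp Require Import all_boot all_order all_algebra.
From mathcomp Require Import reals Rstruct complex.
From mathcomp Require Import ring lra.
Set Implicit Arguments.
Unset Strict Implicit.
Unset Printing Implicit Defensive.
Import Order.TTheory GRing.Theory Num.Theory.
Local Open Scope ring_scope.
Local Open Scope complex_scope.

(* The family b_{u,v} := \sum_y a_{yu,xv} satisfies the defining relations of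
   A_X, so rho_x comes from the universal property. The only nontrivial
   relation is that b_{u,v} is a projection, i.e. that the a_{yu,xv} (y in X)
   are mutually orthogonal; they lie under the projections a_{y,x}, which sum
   to 1. That projections q_i summing to a projection P are mutually
   orthogonal is proved from the C*-axioms alone: for fixed j the elements
   q_j r q_j, with r = q_i (i <> j) or r = 1 - P, sum to 0 and satisfy
   ||1 - q_j r q_j|| <= 1 (by the C*-identity applied to 2^k-th powers), and a
   self-adjoint h with ||t - h|| <= t and ||t + h|| <= t vanishes: for
   g = h / t the condition ||1 +- g|| <= 1 is preserved by g |-> (6/5) g,
   using a unit complex number c with c + c^* = 6/5. *)

Lemma bernoulli_ineq (R : realDomainType) (x : R) n :
  0 <= x -> 1 + n%:R * x <= (1 + x) ^+ n.
Proof.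
move=> x_ge0; elim: n => [|n IH]; first by rewrite mul0r addr0 expr0.
have nx_ge0 : 0 <= n%:R * x by rewrite mulr_ge0.
rewrite exprS -natr1 mulrDl mul1r.
apply: le_trans (ler_wpM2l _ IH); last by rewrite addr_ge0.
nra.
Qed.

Lemma expr_unbounded (R : archiRealFieldType) (r M : R) :
  1 < r -> exists n, M < r ^+ n.
Proof.
move=> r_gt1; have r1_gt0 : 0 < r - 1 by rewrite subr_gt0.
have [M_le0 | M_gt0] := lerP M 0.
  by exists 0%N; rewrite expr0 (le_lt_trans M_le0) ?ltr01.
set n := Num.Def.archi_bound (M / (r - 1)).
have : M / (r - 1) < n%:R by apply: archi_boundP; rewrite divr_ge0 // ltW.
rewrite ltr_pdivrMr // => M_lt; exists n.
apply: (lt_le_trans M_lt); rewrite -{2}(subrKC 1 r).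
have := bernoulli_ineq n (ltW r1_gt0); lra.
Qed.

Lemma le1_of_expr2n_bounded (R : archiRealFieldType) (c M : R) :
  (forall k, c ^+ (2 ^ k) <= M) -> c <= 1.
Proof.
move=> c_bounded; rewrite leNgt; apply/negP => c_gt1.
have [n M_lt] := expr_unbounded M c_gt1.
have := c_bounded n; apply/negP; rewrite -ltNge (lt_le_trans M_lt) //.
by rewrite ler_weXn2l ?ltW // ltnW // ltn_expl.
Qed.

Section CStarAlgebra.
Variable A : cstar_algebra.
Local Notation N := (@cs_norm A).
Local Notation S := (@cs_star A).
Implicit Types (x y m p : A) (r s : RR).

Lemma star0 : S 0 = 0.
Proof. by apply: (addrI (S 0)); rewrite -cs_starD !addr0. Qed.

Lemma star_nmod_morphism : nmod_morphism S.
Proof. exact: (star0, @cs_starD A). Qed.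

HB.instance Definition _ := GRing.isNmodMorphism.Build A A S star_nmod_morphism.

Lemma star1 : S 1 = 1.
Proof. by rewrite -[S 1]mulr1 -{2}(cs_starK 1) -cs_starM mulr1 cs_starK. Qed.

Lemma starZ_real r x : S (r%:C *: x) = r%:C *: S x.
Proof. by rewrite cs_starZ conjc_real. Qed.

Lemma normZ_ge0 r x : 0 <= r -> N (r%:C *: x) = r * N x.
Proof.
move=> r_ge0; have := cs_normZ r%:C x.
by rewrite ger0_norm ?ler0c // -rmorphM => -[].
Qed.

Lemma norm0 : N 0 = 0.
Proof. by rewrite -(scale0r (0 : A)) -[0 : CC]/(0 : RR)%:C normZ_ge0 ?mul0r. Qed.

Lemma normN x : N (- x) = N x.
Proof. by have := cs_normZ (-1) x; rewrite scaleN1r normrN1 mul1r => -[]. Qed.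

Lemma norm_sum (I : finType) (P : pred I) (F : I -> A) :
  N (\sum_(i | P i) F i) <= \sum_(i | P i) N (F i).
Proof.
elim/big_rec2: _ => [|i y z _ IH]; first by rewrite norm0.
by apply: le_trans (cs_normD _ _) _; rewrite lerD2l.
Qed.

Lemma norm_combination_le r s x y : 0 <= r -> 0 <= s ->
  N (r%:C *: x + s%:C *: y) <= r * N x + s * N y.
Proof. by move=> r_ge0 s_ge0; rewrite -!normZ_ge0 //; apply: cs_normD. Qed.

Lemma normM_le1 x y : N x <= 1 -> N y <= 1 -> N (x * y) <= 1.
Proof.
move=> Nx_le1 Ny_le1; apply: le_trans (cs_normM _ _) _.
have := cs_norm_ge0 x; have := cs_norm_ge0 y; nra.
Qed.

Lemma cstar_eq0 x : S x * x = 0 -> x = 0.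
Proof.
move=> xx0; apply: cs_norm_eq0; apply/eqP.
by have := cs_cstar x; rewrite xx0 norm0 => /eqP; rewrite eq_sym expf_eq0.
Qed.

Lemma star_selfadjointX x n : S x = x -> S (x ^+ n) = x ^+ n.
Proof.
move=> sx; elim: n => [|n IH]; first by rewrite !expr0 star1.
by rewrite {1}exprS cs_starM IH sx -exprSr.
Qed.

Lemma norm_selfadjoint_expr2n x k : S x = x -> N (x ^+ (2 ^ k)) = N x ^+ (2 ^ k).
Proof.
move=> sx; elim: k => [|k IH]; first by rewrite expn0 !expr1.
by rewrite expnSr !exprM -IH -cs_cstar star_selfadjointX.
Qed.

Definition projection p := S p = p /\ p * p = p.

Lemma projection1 : projection 1.
Proof. by split; rewrite ?star1 ?mulr1. Qed.

Lemma projection_compl p : projection p -> projection (1 - p).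
Proof.
move=> [sp pp]; split; first by rewrite raddfB /= star1 sp.
by rewrite mulrBl mul1r mulrBr mulr1 pp subrr subr0.
Qed.

Lemma compl_projection_mul p : projection p -> (1 - p) * p = 0.
Proof. by move=> [_ pp]; rewrite mulrBl mul1r pp subrr. Qed.

Lemma projection_mul_compl p : projection p -> p * (1 - p) = 0.
Proof. by move=> [_ pp]; rewrite mulrBr mulr1 pp subrr. Qed.

Lemma norm_projection_le1 p : projection p -> N p <= 1.
Proof.
move=> [sp pp]; have := cs_cstar p; rewrite sp pp => Np.
have := cs_norm_ge0 p; nra.
Qed.

Lemma norm1_le1 : N 1 <= 1.
Proof. exact/norm_projection_le1/projection1. Qed.

Lemma normX_le1 m n : N m <= 1 -> N (m ^+ n) <= 1.
Proof.
move=> Nm; elim: n => [|n IH]; last by rewrite exprS normM_le1.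
by rewrite expr0 norm1_le1.
Qed.

End CStarAlgebra.

(* The scope annotation makes [c^*] the [conjc] of [cs_starZ]; in ring_scope it
   would be [Num.conj]. *)
Lemma exists_unit_trace_6_5 : exists c : CC, (c^*)%C * c = 1 /\ c + (c^*)%C = (6/5 : RR)%:C.
Proof.
exists ((3/5 : RR) +i* (4/5 : RR)); split; apply/eqP; rewrite eq_complex /=;
  apply/andP; split; apply/eqP; lra.
Qed.

Section QuadraticExpressions.
Variables (A : cstar_algebra) (g : A).

Definition quad (a b c : CC) : A := a%:A + b *: g + c *: (g * g).

Lemma quadD a b c a' b' c' :
  quad a b c + quad a' b' c' = quad (a + a') (b + b') (c + c').
Proof. by rewrite /quad !scalerDl addrACA (addrACA (a%:A)). Qed.

Lemma quadZ k a b c : k *: quad a b c = quad (k * a) (k * b) (k * c).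
Proof. by rewrite /quad !scalerDr !scalerA. Qed.

Lemma quadM_affine a b c d :
  quad a b 0 * quad c d 0 = quad (a * c) (a * d + b * c) (b * d).
Proof.
rewrite /quad !scale0r !addr0 mulrDl !mulrDr -!scalerAl -!scalerAr !mul1r !mulr1.
by rewrite !scalerA scalerDl !addrA.
Qed.

Lemma quad_affine b : quad 1 b 0 = 1 + b *: g.
Proof. by rewrite /quad scale0r addr0 scale1r. Qed.

Lemma star_quad_affine a b : cs_star g = g -> cs_star (quad a b 0) = quad a^* b^* 0.
Proof. by move=> sg; rewrite /quad !scale0r !addr0 cs_starD !cs_starZ star1 sg. Qed.

End QuadraticExpressions.

Section PmContractive.
Variable A : cstar_algebra.
Local Notation N := (@cs_norm A).
Local Notation S := (@cs_star A).
Implicit Types (g h : A) (t : RR).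

Definition pm_contractive g := [/\ S g = g, N (1 - g) <= 1 & N (1 + g) <= 1].

Section Amplification.
Variables (g : A) (g_pm : pm_contractive g).

Lemma norm_quad_6_5_le1 : N (quad g 1 (6/5 : RR)%:C 1) <= 1.
Proof.
have [_ Nsub Nadd] := g_pm.
have -> : quad g 1 (6/5 : RR)%:C 1 =
    (4/5 : RR)%:C *: (quad g 1 1 0 * quad g 1 1 0)
  + (1/5 : RR)%:C *: (quad g 1 (-1) 0 * quad g 1 (-1) 0).
  by rewrite !quadM_affine !quadZ quadD; congr quad; field.
apply: le_trans (norm_combination_le _ _ _ _) _; [lra | lra |].
rewrite !quad_affine scale1r scaleN1r.
have := normM_le1 Nadd Nadd; have := normM_le1 Nsub Nsub; lra.
Qed.

Lemma norm_affine_unit_le1 c :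
  (c^*)%C * c = 1 -> c + (c^*)%C = (6/5 : RR)%:C -> N (1 + c *: g) <= 1.
Proof.
move=> c_unit c_re; have [g_sa _ _] := g_pm.
have : N (1 + c *: g) ^+ 2 <= 1.
  rewrite -cs_cstar -quad_affine star_quad_affine // quadM_affine.
  by rewrite conjc1 !mul1r mulr1 c_unit c_re norm_quad_6_5_le1.
have := cs_norm_ge0 (1 + c *: g); nra.
Qed.

Lemma norm_1_add_6_5_le1 : N (1 + (6/5 : RR)%:C *: g) <= 1.
Proof.
have [c [c_unit c_re]] := exists_unit_trace_6_5.
have Nc : N (quad g 1 c 0) <= 1 by rewrite quad_affine norm_affine_unit_le1.
have Nc' : N (quad g 1 c^* 0) <= 1.
  rewrite quad_affine norm_affine_unit_le1 //; rewrite [conjc (conjc c)]conjcK.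
  - by rewrite mulrC.
  - by rewrite addrC.
move: Nc' c_unit c_re; set d := (c^*)%C => Nd d_unit d_re.
have dE : d = (6/5 : RR)%:C - c by rewrite -d_re addrC addKr.
have sqrs : c * c + d * d = (c + d) ^+ 2 - 2 * (d * c) by ring.
have -> : 1 + (6/5 : RR)%:C *: g =
    (25/64 : RR)%:C *: (quad g 1 c 0 * quad g 1 c 0 + quad g 1 d 0 * quad g 1 d 0)
  + (7/32 : RR)%:C *: (quad g 1 d 0 * quad g 1 c 0).
  (* The g * g coefficients cancel because c * c + d * d = (6/5)^2 - 2 = -14/25. *)
  rewrite -quad_affine !quadM_affine quadD !quadZ quadD.
  by congr quad; [field | rewrite dE; field | rewrite sqrs d_re d_unit; field].
apply: le_trans (norm_combination_le _ _ _ _) _; [lra | lra |].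
have := cs_normD (quad g 1 c 0 * quad g 1 c 0) (quad g 1 d 0 * quad g 1 d 0).
have := normM_le1 Nc Nc; have := normM_le1 Nd Nd; have := normM_le1 Nd Nc.
have := cs_norm_ge0 (quad g 1 c 0 * quad g 1 c 0 + quad g 1 d 0 * quad g 1 d 0).
lra.
Qed.

End Amplification.

Lemma pm_contractiveN g : pm_contractive g -> pm_contractive (- g).
Proof. by case=> g_sa Nsub Nadd; split; rewrite ?raddfN /= ?g_sa ?opprK. Qed.

Lemma pm_contractive_amplify g :
  pm_contractive g -> pm_contractive ((6/5 : RR)%:C *: g).
Proof.
move=> g_pm; have [g_sa _ _] := g_pm; split.
- by rewrite starZ_real g_sa.
- by rewrite -scalerN; exact/norm_1_add_6_5_le1/pm_contractiveN.
- exact: norm_1_add_6_5_le1.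
Qed.

Lemma norm_pm_contractive_le1 g : pm_contractive g -> N g <= 1.
Proof.
case=> _ Nsub Nadd.
have : N ((2 : RR)%:C *: g) <= 2.
  rewrite -[2 : RR]/(2%:R) rmorph_nat scaler_nat mulr2n.
  have -> : g + g = (1 + g) - (1 - g) by rewrite opprB [RHS]addrC addrA subrK.
  by apply: le_trans (cs_normD _ _) _; rewrite normN; lra.
rewrite normZ_ge0 //; lra.
Qed.

Lemma pm_contractive_eq0 g : pm_contractive g -> g = 0.
Proof.
move=> g_pm; have amplified n : pm_contractive (((6/5 : RR) ^+ n)%:C *: g).
  elim: n => [|n IH]; first by rewrite expr0 scale1r.
  by rewrite exprS rmorphM -scalerA; apply: pm_contractive_amplify.
apply: cs_norm_eq0; apply/eqP; rewrite eq_le cs_norm_ge0 andbT leNgt.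
apply/negP => Ng_gt0; have r_gt1 : 1 < 6/5 :> RR by lra.
have [n] := expr_unbounded (N g)^-1 r_gt1.
rewrite -div1r ltr_pdivrMr // -normZ_ge0 ?exprn_ge0 ?(le_trans ler01 (ltW r_gt1)) //.
by rewrite ltNge norm_pm_contractive_le1.
Qed.

Lemma selfadjoint_eq0_of_norm_pm_le t h : 0 < t -> S h = h ->
  N (t%:C *: 1 - h) <= t -> N (t%:C *: 1 + h) <= t -> h = 0.
Proof.
move=> t_gt0 h_sa Nsub Nadd.
have tK : (t^-1)%:C * t%:C = 1 by rewrite -rmorphM mulVf ?gt_eqF.
have scale_le1 x : N x <= t -> N ((t^-1)%:C *: x) <= 1.
  move=> Nx; rewrite normZ_ge0 ?invr_ge0 ?(ltW t_gt0) //.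
  by rewrite mulrC ler_pdivrMr // mul1r.
have g_pm : pm_contractive ((t^-1)%:C *: h).
  split; first by rewrite starZ_real h_sa.
  - by rewrite -[X in X - _]scale1r -tK -scalerA -scalerBr scale_le1.
  - by rewrite -[X in X + _]scale1r -tK -scalerA -scalerDr scale_le1.
by rewrite -[h]scale1r -tK mulrC -scalerA (pm_contractive_eq0 g_pm) scaler0.
Qed.

End PmContractive.

Section Projections.
Variable A : cstar_algebra.
Local Notation N := (@cs_norm A).
Local Notation S := (@cs_star A).
Implicit Types (h e m p q : A).

Lemma orthogonal_addX e m n : e * e = e -> e * m = 0 -> m * e = 0 ->
  (e + m) ^+ n.+1 = e + m ^+ n.+1.
Proof.
move=> ee em me; elim: n => [|n IH]; first by rewrite !expr1.
rewrite exprS IH mulrDl !mulrDr ee me add0r -exprS.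
by rewrite [in e * _]exprS mulrA em mul0r addr0.
Qed.

Lemma norm_orthogonal_add_le1 e m : projection e -> S m = m -> N m <= 1 ->
  e * m = 0 -> m * e = 0 -> N (e + m) <= 1.
Proof.
move=> e_proj m_sa Nm em me; have [e_sa ee] := e_proj.
apply: (@le1_of_expr2n_bounded _ _ 2) => k.
rewrite -norm_selfadjoint_expr2n; last by rewrite cs_starD e_sa m_sa.
rewrite -(prednK (expn_gt0 2 k)) orthogonal_addX //.
apply: le_trans (cs_normD _ _) _.
have := norm_projection_le1 e_proj; have := normX_le1 (2 ^ k).-1.+1 Nm; lra.
Qed.

Lemma norm_1_sub_sandwich_le1 p q : projection p -> projection q ->
  N (1 - p * q * p) <= 1.
Proof.
move=> p_proj q_proj; have [p_sa pp] := p_proj.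
have q'_proj := projection_compl q_proj; have [q'_sa _] := q'_proj.
have -> : 1 - p * q * p = (1 - p) + p * (1 - q) * p.
  by rewrite mulrBr mulr1 mulrBl pp addrA subrK.
apply: norm_orthogonal_add_le1.
- exact: projection_compl.
- by rewrite !cs_starM p_sa q'_sa mulrA.
- by rewrite !normM_le1 ?norm_projection_le1.
- by rewrite !mulrA compl_projection_mul ?mul0r.
- by rewrite -mulrA projection_mul_compl ?mulr0.
Qed.

Lemma sum_selfadjoint_contractions_eq0 (I : finType) (h : I -> A) :
  (forall i, S (h i) = h i) -> (forall i, N (1 - h i) <= 1) ->
  \sum_i h i = 0 -> forall i, h i = 0.
Proof.
move=> h_sa h_contr h_sum0 i; set t : RR := #|I|%:R.
have t_gt0 : 0 < t by rewrite ltr0n; apply/card_gt0P; exists i.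
have tE : t = 1 + \sum_(j | j != i) 1 by rewrite /t -sumr_const (bigD1 i).
have tE' : t%:C *: 1 = 1 + \sum_(j | j != i) (1 : A).
  by rewrite /t rmorph_nat scaler_nat -sumr_const (bigD1 i).
have others_le (x : I -> A) : (forall j, N (x j) <= 1) ->
    N (\sum_(j | j != i) x j) <= t - 1.
  move=> x_le1; rewrite tE addrC addKr.
  by apply: le_trans (norm_sum _ _) _; apply: ler_sum => j _.
have hE : h i = - \sum_(j | j != i) h j.
  by apply/eqP; rewrite -addr_eq0; move: h_sum0; rewrite (bigD1 i) // => ->.
apply: (selfadjoint_eq0_of_norm_pm_le t_gt0 (h_sa i)).
- rewrite tE' addrAC; apply: le_trans (cs_normD _ _) _.
  have := h_contr i; have := others_le _ (fun=> norm1_le1 A); lra.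
- rewrite tE' hE -addrA -sumrB; apply: le_trans (cs_normD _ _) _.
  have := norm1_le1 A; have := others_le _ h_contr; lra.
Qed.

Lemma projection_sum_compl_orthogonal (I : finType) q (r : I -> A) :
  projection q -> (forall i, projection (r i)) -> \sum_i r i = 1 - q ->
  forall i, r i * q = 0.
Proof.
move=> q_proj r_proj r_sum; have [q_sa _] := q_proj.
have sandwich0 : forall i, q * r i * q = 0.
  apply: (@sum_selfadjoint_contractions_eq0 _ (fun i => q * r i * q)) => [i | i |].
  - by rewrite !cs_starM q_sa (r_proj i).1 mulrA.
  - exact: norm_1_sub_sandwich_le1.
  - by rewrite -mulr_suml -mulr_sumr r_sum projection_mul_compl ?mul0r.
move=> i; have [ri_sa riri] := r_proj i; apply: cstar_eq0.
by rewrite cs_starM ri_sa q_sa mulrA -(mulrA q) riri sandwich0.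
Qed.

Section ProjectionSums.
Variables (I : finType) (q : I -> A) (P : A).
Hypotheses (q_proj : forall i, projection (q i)) (P_proj : projection P).
Hypothesis q_sum : \sum_i q i = P.

Lemma projection_sum_compl_family j i :
  (if i == j then 1 - P else q i) * q j = 0.
Proof.
apply: (@projection_sum_compl_orthogonal _ _ (fun i => if i == j then 1 - P else q i)).
- exact: q_proj.
- move=> {}i.
  by case: eqP => _; [apply: projection_compl | apply: q_proj].
- rewrite (bigD1 j) //= eqxx; under eq_bigr => k /negbTE -> do [].
  by rewrite -q_sum (bigD1 j) //= opprD addrA subrK.
Qed.

Lemma projection_sum_orthogonal i j : i != j -> q i * q j = 0.
Proof. by move=> /negbTE ij; have := projection_sum_compl_family j i; rewrite ij. Qed.

Lemma projection_sum_mull i : P * q i = q i.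
Proof.
have := projection_sum_compl_family i i; rewrite eqxx mulrBl mul1r.
by move/eqP; rewrite subr_eq0 => /eqP <-.
Qed.

End ProjectionSums.

End Projections.

Lemma tuple_rcons (T : Type) n (u : n.+1.-tuple T) :
  exists (u' : n.-tuple T) c, u = rcons_tuple u' c.
Proof.
case: u => s; case/lastP: s => [//|s c] s_size.
have s_size' : size s == n by rewrite size_rcons in s_size.
by exists (Tuple s_size'), c; apply: val_inj.
Qed.

Lemma cons_rcons_tuple (T : Type) n (u : n.-tuple T) y c :
  cons_tuple y (rcons_tuple u c) = rcons_tuple (cons_tuple y u) c.
Proof. exact: val_inj. Qed.

Lemma cons_tuple0 (T : Type) (y : T) : cons_tuple y [tuple] = rcons_tuple [tuple] y.
Proof. exact: val_inj. Qed.

Section AXRelations.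
Variables (X : finType) (A : cstar_algebra) (a : word_family X A).
Hypothesis a_rel : AX_relations a.

Lemma AX_projection n (u v : n.-tuple X) : projection (a u v).
Proof. by case: a_rel => _ a_proj _; apply: a_proj. Qed.

Lemma AX_refine n (u v : n.-tuple X) c d :
  a u v * a (rcons_tuple u c) (rcons_tuple v d) =
  a (rcons_tuple u c) (rcons_tuple v d).
Proof.
case: a_rel => _ _ /(_ n u v c) [row_sum _].
exact: projection_sum_mull (fun=> AX_projection _ _) (AX_projection u v) (esym row_sum) d.
Qed.

Variable x : X.
Local Notation col y := (a (cons_tuple y [tuple]) (cons_tuple x [tuple])).

Lemma AX_col_sum : \sum_y col y = 1.
Proof.
case: a_rel => a0 _ /(_ 0%N [tuple] [tuple] x) [_ col_sum].
by rewrite -a0 col_sum; apply: eq_bigr => y _; rewrite !cons_tuple0.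
Qed.

Lemma AX_col_orthogonal y y' : y != y' -> col y * col y' = 0.
Proof.
apply: (@projection_sum_orthogonal _ _ (fun y => col y) 1 _ _ AX_col_sum).
- by move=> y''; apply: AX_projection.
- exact: projection1.
Qed.

Lemma AX_col_mull n (u v : n.-tuple X) y :
  col y * a (cons_tuple y u) (cons_tuple x v) = a (cons_tuple y u) (cons_tuple x v).
Proof.
elim: n u v => [|n IH] u v.
  rewrite (tuple0 u) (tuple0 v).
  by case: (AX_projection (cons_tuple y [tuple]) (cons_tuple x [tuple])).
have [u' [c ->]] := tuple_rcons u; have [v' [d ->]] := tuple_rcons v.
by rewrite !cons_rcons_tuple -(AX_refine (cons_tuple y u') (cons_tuple x v')) mulrA IH.
Qed.

Lemma AX_col_mulr n (u v : n.-tuple X) y :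
  a (cons_tuple y u) (cons_tuple x v) * col y = a (cons_tuple y u) (cons_tuple x v).
Proof.
have [a_sa _] := AX_projection (cons_tuple y u) (cons_tuple x v).
have [col_sa _] := AX_projection (cons_tuple y [tuple]) (cons_tuple x [tuple]).
by rewrite -{1}a_sa -{1}col_sa -cs_starM AX_col_mull a_sa.
Qed.

Definition AX_shift : word_family X A :=
  fun n (u v : n.-tuple X) => \sum_y a (cons_tuple y u) (cons_tuple x v).

Lemma AX_shift_orthogonal n (u v : n.-tuple X) y y' : y != y' ->
  a (cons_tuple y u) (cons_tuple x v) * a (cons_tuple y' u) (cons_tuple x v) = 0.
Proof.
move=> yy'; rewrite -AX_col_mulr -(AX_col_mull _ _ y') -mulrA (mulrA (col y)).
by rewrite AX_col_orthogonal // mul0r mulr0.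
Qed.

Lemma AX_relations_shift : AX_relations AX_shift.
Proof.
case: a_rel => _ _ a_sum; split.
- exact: AX_col_sum.
- move=> n u v; split.
    rewrite raddf_sum; apply: eq_bigr => y _.
    by case: (AX_projection (cons_tuple y u) (cons_tuple x v)).
  rewrite /AX_shift mulr_suml; apply: eq_bigr => y _.
  rewrite mulr_sumr (bigD1 y) //= big1 ?addr0 => [|y' y'y].
    by case: (AX_projection (cons_tuple y u) (cons_tuple x v)).
  by rewrite AX_shift_orthogonal // eq_sym.
- move=> n u v c; rewrite /AX_shift; split; rewrite exchange_big /=; apply: eq_bigr => y _.
  + by rewrite (a_sum _ _ _ c).1; apply: eq_bigr => d _; rewrite !cons_rcons_tuple.
  + by rewrite (a_sum _ _ _ c).2; apply: eq_bigr => d _; rewrite !cons_rcons_tuple.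
Qed.

End AXRelations.

Theorem proposition4p1 (X : finType) (A : cstar_algebra) (a : word_family X A) :
  is_universal_AX a ->
  forall x : X, exists rho : A -> A,
    star_hom rho /\
    forall (n : nat) (u v : n.-tuple X),
      rho (a n u v) = \sum_(y : X) a n.+1 (cons_tuple y u) (cons_tuple x v).
Proof.
move=> [a_rel a_univ] x.
have [rho [rho_hom rho_a _]] := a_univ A _ (AX_relations_shift a_rel x).
by exists rho.
Qed.
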